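(* In the setting of the context (with $g$ unimodal, symmetric about $0$ and logconcave), $C(\theta)\ge C(2d_0)$ for all $\theta\in[0,d_1]$.
   Context: Let $g$ be a probability density on $\mathbb{R}$, unimodal and symmetric about $0$ (i.e. $g(z)=g(-z)$ and $g$ nonincreasing on $[0,\infty)$), and logconcave ($\log g$ concave on its support), with cdf $G$ and quantile function $G^{-1}(t)=\inf\{x:G(x)\ge t\}$. Let $X$ have density $g(x-\theta)$, $\theta\ge0$, and $P_\theta$ the corresponding probability. Fix $\alpha\in(0,1)$, and set $d_0=G^{-1}(\tfrac1{1+\alpha})$, $d_1=G^{-1}(1-\tfrac\alpha2)$. The HPD credible interval (prior $1_{[0,\infty)}(\theta)$, credibility $1-\alpha$) is $[l(X),u(X)]$ with $l(x)=\{x-G^{-1}(\tfrac12+\tfrac{1-\alpha}2G(x))\}1_{(d_0,\infty)}(x)$, $u(x)=x-G^{-1}(\alpha G(x))$ for $x\le d_0$ and $u(x)=x+G^{-1}(\tfrac12+\tfrac{1-\alpha}2G(x))$ for $x>d_0$. The frequentist coverage is $C(\theta)=P_\theta(l(X)\le\theta\le u(X))$. *)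

From Stdlib Require Import Reals Lra ClassicalEpsilon.
Open Scope R_scope.

Definition improper_int (f : R -> R) (v : R) : Prop :=
  forall eps, 0 < eps -> exists M, forall a b, a <= -M -> M <= b ->
    exists pr : Riemann_integrable f a b, Rabs (RiemannInt pr - v) < eps.

Definition lower_int (f : R -> R) (x v : R) : Prop :=
  forall eps, 0 < eps -> exists M, forall a, a <= -M ->
    exists pr : Riemann_integrable f a x, Rabs (RiemannInt pr - v) < eps.

Definition is_lower_bound (E : R -> Prop) (m : R) : Prop := forall x, E x -> m <= x.
Definition is_glb (E : R -> Prop) (m : R) : Prop :=
  is_lower_bound E m /\ (forall b, is_lower_bound E b -> b <= m).

(* Quantile G^{-1}(t) = inf {x | G x >= t}; chosen by epsilon, so it is the
   infimum whenever that infimum is finite (always the case for 0 < t < 1). *)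
Definition quantile (G : R -> R) (t : R) : R :=
  epsilon (inhabits 0) (fun q => is_glb (fun x => t <= G x) q).

Definition dzero (G : R -> R) (alpha : R) : R := quantile G (1 / (1 + alpha)).
Definition dzero1 (G : R -> R) (alpha : R) : R := quantile G (1 - alpha / 2).

Definition hpd_l (G : R -> R) (alpha x : R) : R :=
  if Rle_dec x (dzero G alpha) then 0
  else x - quantile G (1/2 + (1 - alpha) / 2 * G x).

(* Indicator of l(x) <= theta <= u(x).  When x <= d0 and G x = 0,
   u(x) = x - G^{-1}(0) = +oo, so the upper constraint holds. *)
Definition cover_ind (G : R -> R) (alpha theta x : R) : R :=
  if Rle_dec (hpd_l G alpha x) theta then
    (if Rle_dec x (dzero G alpha) then
       (if Req_EM_T (G x) 0 then 1
        else if Rle_dec theta (x - quantile G (alpha * G x)) then 1 else 0)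
     else if Rle_dec theta (x + quantile G (1/2 + (1 - alpha) / 2 * G x))
          then 1 else 0)
  else 0.

(* Integrand of the coverage probability C(theta) = P_theta(l(X)<=theta<=u(X)),
   X having density g(x - theta). *)
Definition cov_integrand (g G : R -> R) (alpha theta : R) (x : R) : R :=
  cover_ind G alpha theta x * g (x - theta).

Definition is_density (g : R -> R) : Prop :=
  (forall z, 0 <= g z) /\ improper_int g 1.
Definition symmetric_unimodal (g : R -> R) : Prop :=
  (forall z, g z = g (- z)) /\ (forall x y, 0 <= x -> x <= y -> g y <= g x).
(* log g concave on its (convex) support. *)
Definition logconcave (g : R -> R) : Prop :=
  forall x y t, 0 < g x -> 0 < g y -> 0 <= t <= 1 ->
    0 < g (t * x + (1 - t) * y) /\
    t * ln (g x) + (1 - t) * ln (g y) <= ln (g (t * x + (1 - t) * y)).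

From Stdlib Require Import Reals.
Open Scope R_scope.

From Stdlib Require Import Lra ClassicalEpsilon Classical.
From Coquelicot Require Import Coquelicot.

(* The argument
   compares both coverages with the probability of a fixed window:
   - for 0 <= theta <= d1 every x in [theta - d1, theta + d0] has
     theta in [l x, u x], so C(theta) >= G d0 - G(-d1);
   - for theta = 2 d0 no x outside [d0, 2 d0 + d1] covers theta, so
     C(2 d0) <= G d1 - G(-d0);
   - by symmetry of G these two window probabilities are equal.
   The geometric facts behind the first two steps are that the covered set
   of x is an interval, that d1 <= 2 d0, and that the HPD interval of an
   x < d0 never reaches 2 d0; they follow from the log-concavity of G
   (the ratio G(y - c) / G y is nondecreasing in y) and the unimodality of g. *)

Lemma RiemannInt_RInt (f : R -> R) (a b : R) (pr : Riemann_integrable f a b) :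
  RiemannInt pr = RInt f a b.
Proof. symmetry; apply RInt_Reals. Qed.

Lemma ex_RInt_sub (f : R -> R) (A B a b : R) :
  ex_RInt f A B -> A <= a <= B -> A <= b <= B -> ex_RInt f a b.
Proof.
  intros HAB Ha Hb.
  assert (Hle : forall u v, A <= u <= v -> v <= B -> ex_RInt f u v).
  { intros u v Hu Hv.
    apply (ex_RInt_Chasles_2 f A u v); [lra|].
    apply (ex_RInt_Chasles_1 f A v B); [lra|exact HAB]. }
  destruct (Rle_dec a b).
  - apply Hle; lra.
  - apply ex_RInt_swap, Hle; lra.
Qed.

Lemma RInt_mono_domain (h : R -> R) (A a b B : R) :
  (forall x, 0 <= h x) -> ex_RInt h A B -> A <= a -> a <= b -> b <= B ->
  RInt h a b <= RInt h A B.
Proof.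
  intros Hpos HAB Ha Hab Hb.
  assert (HAa : ex_RInt h A a) by (apply (ex_RInt_sub h A B); [exact HAB|lra|lra]).
  assert (Hab' : ex_RInt h a b) by (apply (ex_RInt_sub h A B); [exact HAB|lra|lra]).
  assert (HbB : ex_RInt h b B) by (apply (ex_RInt_sub h A B); [exact HAB|lra|lra]).
  assert (HaB : ex_RInt h a B) by (apply (ex_RInt_sub h A B); [exact HAB|lra|lra]).
  assert (E1 : RInt h A a + RInt h a B = RInt h A B) by exact (RInt_Chasles h A a B HAa HaB).
  assert (E2 : RInt h a b + RInt h b B = RInt h a B) by exact (RInt_Chasles h a b B Hab' HbB).
  assert (0 <= RInt h A a) by (apply RInt_ge_0; auto).
  assert (0 <= RInt h b B) by (apply RInt_ge_0; auto).
  lra.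
Qed.

Lemma eq_of_close (A B : R) : (forall eps, 0 < eps -> Rabs (A - B) < eps) -> A = B.
Proof.
  intros H. destruct (Req_dec A B) as [|Hne]; [assumption|].
  specialize (H (Rabs (A - B))). assert (0 < Rabs (A - B)) by (apply Rabs_pos_lt; lra).
  specialize (H ltac:(assumption)). lra.
Qed.

Lemma improper_int_RInt (h : R -> R) (v : R) :
  (forall a b, ex_RInt h a b) ->
  improper_int h v <-> forall eps, 0 < eps -> exists M, forall a b,
    a <= - M -> M <= b -> Rabs (RInt h a b - v) < eps.
Proof.
  intros Hint; split; intros Hv eps Heps; destruct (Hv eps Heps) as [M HM];
    exists M; intros a b Ha Hb.
  - destruct (HM a b Ha Hb) as [pr Hpr]. rewrite <- (RiemannInt_RInt _ _ _ pr). exact Hpr.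
  - exists (ex_RInt_Reals_0 _ _ _ (Hint a b)). rewrite RiemannInt_RInt. auto.
Qed.

Lemma lower_int_RInt (h : R -> R) (x v : R) :
  lower_int h x v -> forall eps, 0 < eps -> exists M, forall a,
    a <= - M -> Rabs (RInt h a x - v) < eps.
Proof.
  intros Hv eps Heps. destruct (Hv eps Heps) as [M HM]. exists M. intros a Ha.
  destruct (HM a Ha) as [pr Hpr]. rewrite <- (RiemannInt_RInt _ _ _ pr). exact Hpr.
Qed.

Lemma ex_RInt_scal_R (k : R) (f : R -> R) (a b : R) :
  ex_RInt f a b -> ex_RInt (fun x => k * f x) a b.
Proof. exact (ex_RInt_scal f a b k). Qed.

Lemma RInt_scal_R (k : R) (f : R -> R) (a b : R) :
  ex_RInt f a b -> RInt (fun x => k * f x) a b = k * RInt f a b.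
Proof. exact (RInt_scal f a b k). Qed.

Definition order_convex (J : R -> Prop) : Prop :=
  forall x y z, J x -> J z -> x <= y <= z -> J y.

Definition mask (J : R -> Prop) (f : R -> R) (x : R) : R :=
  if excluded_middle_informative (J x) then f x else 0.

Lemma ex_RInt_zero_on (f : R -> R) (a b : R) :
  (forall x, Rmin a b < x < Rmax a b -> f x = 0) -> ex_RInt f a b.
Proof.
  intros Hf. apply (ex_RInt_ext (fun _ => 0)); [intros x Hx; symmetry; auto|].
  apply (ex_RInt_const a b (0 : R)).
Qed.

Lemma RInt_zero_on (f : R -> R) (a b : R) :
  (forall x, Rmin a b < x < Rmax a b -> f x = 0) -> RInt f a b = 0.
Proof.
  intros Hf. rewrite (RInt_ext f (fun _ => 0)) by auto.
  rewrite RInt_const. apply Rmult_0_r.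
Qed.

Lemma interval_trace (J : R -> Prop) (a b : R) :
  order_convex J -> (exists x, a <= x <= b /\ J x) ->
  exists m M, a <= m <= M /\ M <= b /\ (forall y, m < y < M -> J y) /\
    (forall y, a <= y <= b -> y < m \/ M < y -> ~ J y).
Proof.
  intros HJ [x0 Ex0].
  set (E := fun x => a <= x <= b /\ J x).
  destruct (completeness E) as [M [HMub HMlub]].
  { exists b. intros x Ex. apply Ex. }
  { exists x0. exact Ex0. }
  destruct (completeness (fun x => E (- x))) as [m' [Hmub Hmlub]].
  { exists (- a). intros x Ex. destruct Ex as [Hx _]. lra. }
  { exists (- x0). rewrite Ropp_involutive. exact Ex0. }
  assert (Hm : forall x, E x -> - m' <= x).
  { intros x Ex. assert (- x <= m') by (apply Hmub; rewrite Ropp_involutive; exact Ex).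
    lra. }
  exists (- m'), M. split; [split|split; [|split]].
  - assert (m' <= - a) by (apply Hmlub; intros x [Hx _]; lra). lra.
  - apply Rle_trans with x0; [apply Hm, Ex0|apply HMub, Ex0].
  - apply HMlub. intros x [Hx _]; lra.
  - intros y Hy.
    assert (Hlow : exists x, E x /\ x < y).
    { apply NNPP; intro Hn. assert (m' <= - y); [|lra].
      apply Hmlub. intros x Ex. apply Rnot_lt_le; intro Hlt.
      apply Hn. exists (- x). split; [exact Ex|lra]. }
    assert (Hhigh : exists z, E z /\ y < z).
    { apply NNPP; intro Hn. assert (M <= y); [|lra].
      apply HMlub. intros z Ez. apply Rnot_lt_le; intro Hlt. apply Hn. eauto. }
    destruct Hlow as [x [[_ Jx] Hxy]]. destruct Hhigh as [z [[_ Jz] Hyz]].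
    apply (HJ x y z); [exact Jx|exact Jz|lra].
  - intros y Hy Hout Jy.
    assert (- m' <= y <= M) by (split; [apply Hm|apply HMub]; split; auto). lra.
Qed.

(* Masking only cuts [f] at the endpoints of the trace of [J] on [a, b]. *)
Lemma ex_RInt_mask_le (J : R -> Prop) (f : R -> R) (a b : R) :
  a <= b -> order_convex J -> ex_RInt f a b -> ex_RInt (mask J f) a b.
Proof.
  intros Hab HJ Hf. unfold mask.
  destruct (classic (exists x, a <= x <= b /\ J x)) as [Hex|Hne].
  2:{ apply ex_RInt_zero_on. intros x Hx.
      destruct excluded_middle_informative as [Jx|]; [|reflexivity].
      exfalso; apply Hne; exists x. rewrite Rmin_left, Rmax_right in Hx by lra.
      split; [lra|exact Jx]. }
  destruct (interval_trace J a b HJ Hex) as (m & M & Hm & HMb & Hinside & Houtside).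
  apply ex_RInt_Chasles with m; [|apply ex_RInt_Chasles with M].
  - apply ex_RInt_zero_on. intros y Hy. rewrite Rmin_left, Rmax_right in Hy by lra.
    destruct excluded_middle_informative as [Jy|]; [|reflexivity].
    exfalso; apply (Houtside y); [lra|left; lra|exact Jy].
  - apply (ex_RInt_ext f).
    + intros y Hy. rewrite Rmin_left, Rmax_right in Hy by lra.
      destruct excluded_middle_informative as [|Jy]; [reflexivity|].
      exfalso; apply Jy, Hinside; lra.
    + apply (ex_RInt_sub f a b); [exact Hf|lra|lra].
  - apply ex_RInt_zero_on. intros y Hy. rewrite Rmin_left, Rmax_right in Hy by lra.
    destruct excluded_middle_informative as [Jy|]; [|reflexivity].
    exfalso; apply (Houtside y); [lra|right; lra|exact Jy].
Qed.

Lemma ex_RInt_mask (J : R -> Prop) (f : R -> R) (a b : R) :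
  order_convex J -> ex_RInt f a b -> ex_RInt (mask J f) a b.
Proof.
  intros HJ Hf. destruct (Rle_dec a b).
  - apply ex_RInt_mask_le; auto.
  - apply ex_RInt_swap, ex_RInt_mask_le; [lra|exact HJ|]. apply ex_RInt_swap, Hf.
Qed.

(* A nonnegative function whose integrals over bounded intervals are bounded
   has an improper integral (the supremum of those integrals). *)
Lemma improper_int_exists (h : R -> R) (B : R) :
  (forall x, 0 <= h x) -> (forall a b, ex_RInt h a b) ->
  (forall a b, a <= b -> RInt h a b <= B) -> exists v, improper_int h v.
Proof.
  intros Hpos Hint HB.
  set (S := fun v => exists a b, a <= b /\ v = RInt h a b).
  destruct (completeness S) as [V [HVub HVlub]].
  { exists B. intros v (a & b & Hab & ->). auto. }
  { exists (RInt h 0 0), 0, 0. split; [lra|reflexivity]. }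
  exists V. apply improper_int_RInt; [exact Hint|]. intros eps Heps.
  assert (Hnear : exists a0 b0, a0 <= b0 /\ V - eps < RInt h a0 b0).
  { apply NNPP; intro Hn. assert (V <= V - eps); [|lra].
    apply HVlub. intros v (a & b & Hab & ->). apply Rnot_lt_le; intro Hlt.
    apply Hn. exists a, b. auto. }
  destruct Hnear as (a0 & b0 & Hab0 & Hlt).
  exists (Rabs a0 + Rabs b0). intros a b Ha Hb.
  pose proof (Rle_abs a0). pose proof (Rle_abs (- a0)). pose proof (Rle_abs b0).
  pose proof (Rabs_pos a0). pose proof (Rabs_pos b0). rewrite Rabs_Ropp in *.
  assert (RInt h a b <= V) by (apply HVub; exists a, b; split; [lra|reflexivity]).
  assert (RInt h a0 b0 <= RInt h a b) by (apply RInt_mono_domain; auto; lra).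
  apply Rabs_def1; lra.
Qed.

Lemma RInt_le_improper_int (h : R -> R) (V a b : R) :
  (forall x, 0 <= h x) -> (forall a b, ex_RInt h a b) -> improper_int h V ->
  a <= b -> RInt h a b <= V.
Proof.
  intros Hpos Hint HV Hab. apply Rnot_lt_le; intro Hlt.
  rewrite (improper_int_RInt h V Hint) in HV.
  destruct (HV (RInt h a b - V)) as [M HM]; [lra|].
  specialize (HM (Rmin (- M) a) (Rmax M b) (Rmin_l _ _) (Rmax_l _ _)).
  assert (RInt h a b <= RInt h (Rmin (- M) a) (Rmax M b))
    by (apply RInt_mono_domain; auto; [apply Rmin_r|apply Rmax_r]).
  apply Rabs_def2 in HM. lra.
Qed.

Lemma improper_int_compact_support (h : R -> R) (V p q : R) :
  (forall a b, ex_RInt h a b) -> p <= q ->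
  (forall x, x < p \/ q < x -> h x = 0) -> improper_int h V -> V = RInt h p q.
Proof.
  intros Hint Hpq Hout HV. rewrite (improper_int_RInt h V Hint) in HV.
  apply eq_of_close; intros eps Heps. destruct (HV eps Heps) as [M HM].
  set (A := Rmin (- M) p). set (B := Rmax M q).
  assert (HA : A <= p) by apply Rmin_r. assert (HB : q <= B) by apply Rmax_r.
  assert (Htail1 : RInt h A p = 0).
  { apply RInt_zero_on. intros x Hx. rewrite Rmin_left, Rmax_right in Hx by lra.
    apply Hout; lra. }
  assert (Htail2 : RInt h q B = 0).
  { apply RInt_zero_on. intros x Hx. rewrite Rmin_left, Rmax_right in Hx by lra.
    apply Hout; lra. }
  assert (Hsplit : RInt h A p + (RInt h p q + RInt h q B) = RInt h A B).
  { rewrite <- (RInt_Chasles h A p B), <- (RInt_Chasles h p q B); auto. }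
  specialize (HM A B (Rmin_l _ _) (Rmax_l _ _)).
  rewrite <- Hsplit, Htail1, Htail2, Rplus_0_l, Rplus_0_r in HM.
  rewrite <- Rabs_Ropp, Ropp_minus_distr in HM. exact HM.
Qed.

Section Distribution.

Variables g G : R -> R.
Hypothesis g_nonneg : forall z, 0 <= g z.
Hypothesis g_total : improper_int g 1.
Hypothesis g_even : forall z, g z = g (- z).
Hypothesis g_nonincr : forall x y, 0 <= x -> x <= y -> g y <= g x.
Hypothesis G_def : forall x, lower_int g x (G x).

Lemma g_integrable (a b : R) : ex_RInt g a b.
Proof.
  destruct (g_total 1 Rlt_0_1) as [M HM].
  set (A := Rmin (Rmin a b) (- M)). set (B := Rmax (Rmax a b) M).
  destruct (HM A B (Rmin_r _ _) (Rmax_r _ _)) as [pr _].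
  apply (ex_RInt_sub g A B); [exact (ex_RInt_Reals_1 _ _ _ pr)| |];
    unfold A, B, Rmin, Rmax; repeat destruct Rle_dec; lra.
Qed.

Lemma RInt_g (x y : R) : RInt g x y = G y - G x.
Proof.
  apply eq_of_close; intros eps Heps.
  destruct (lower_int_RInt g x (G x) (G_def x) (eps / 2)) as [Mx HMx]; [lra|].
  destruct (lower_int_RInt g y (G y) (G_def y) (eps / 2)) as [My HMy]; [lra|].
  set (a := Rmin (Rmin (- Mx) (- My)) x).
  assert (Hsplit : RInt g a x + RInt g x y = RInt g a y)
    by exact (RInt_Chasles g a x y (g_integrable _ _) (g_integrable _ _)).
  specialize (HMx a ltac:(unfold a, Rmin; repeat destruct Rle_dec; lra)).
  specialize (HMy a ltac:(unfold a, Rmin; repeat destruct Rle_dec; lra)).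
  apply Rabs_def2 in HMx. apply Rabs_def2 in HMy. apply Rabs_def1; lra.
Qed.

Lemma shifted_g_integrable (c a b : R) : ex_RInt (fun t => g (t - c)) a b.
Proof.
  apply (ex_RInt_ext (fun t => scal 1 (g (1 * t + - c)))).
  - intros t _. cbn. unfold mult; cbn. rewrite Rmult_1_l. f_equal; ring.
  - apply (ex_RInt_comp_lin g 1 (- c) a b), g_integrable.
Qed.

Lemma RInt_shifted_g (c a b : R) :
  RInt (fun t => g (t - c)) a b = G (b - c) - G (a - c).
Proof.
  transitivity (RInt g (1 * a + - c) (1 * b + - c)).
  - rewrite <- (RInt_comp_lin g 1 (- c) a b (g_integrable _ _)).
    apply RInt_ext. intros t _. cbn. unfold mult; cbn. rewrite Rmult_1_l. f_equal; ring.
  - rewrite RInt_g. f_equal; f_equal; ring.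
Qed.

Lemma g_le_g0 (z : R) : g z <= g 0.
Proof.
  destruct (Rle_dec 0 z).
  - apply g_nonincr; lra.
  - rewrite g_even. apply g_nonincr; lra.
Qed.

Lemma G_nondecr (x y : R) : x <= y -> G x <= G y.
Proof.
  intros Hxy. pose proof (RInt_g x y).
  assert (0 <= RInt g x y) by (apply RInt_ge_0; auto; apply g_integrable).
  lra.
Qed.

Lemma G_lipschitz (x y : R) : x <= y -> G y - G x <= g 0 * (y - x).
Proof.
  intros Hxy. rewrite <- RInt_g.
  replace (g 0 * (y - x)) with (RInt (fun _ => g 0) x y)
    by (rewrite RInt_const; cbn; unfold mult; cbn; ring).
  apply RInt_le; [exact Hxy|apply g_integrable|apply ex_RInt_const|].
  intros; apply g_le_g0.
Qed.

Lemma G_nonneg (x : R) : 0 <= G x.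
Proof.
  apply Rnot_lt_le; intro Hlt.
  destruct (lower_int_RInt g x (G x) (G_def x) (- G x)) as [M HM]; [lra|].
  specialize (HM (Rmin (- M) x) (Rmin_l _ _)).
  assert (0 <= RInt g (Rmin (- M) x) x)
    by (apply RInt_ge_0; [apply Rmin_r|apply g_integrable|auto]).
  apply Rabs_def2 in HM. lra.
Qed.

Lemma G_le_1 (x : R) : G x <= 1.
Proof.
  apply Rnot_lt_le; intro Hlt. set (eps := (G x - 1) / 2).
  destruct (g_total eps) as [M HM]; [unfold eps; lra|].
  destruct (lower_int_RInt g x (G x) (G_def x) eps) as [Mx HMx]; [unfold eps; lra|].
  set (a := Rmin (Rmin (- M) (- Mx)) x). set (b := Rmax M x).
  destruct (HM a b ltac:(unfold a, Rmin; repeat destruct Rle_dec; lra) (Rmax_l _ _))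
    as [pr Hpr].
  rewrite RiemannInt_RInt in Hpr.
  specialize (HMx a ltac:(unfold a, Rmin; repeat destruct Rle_dec; lra)).
  assert (RInt g a x <= RInt g a b).
  { apply RInt_mono_domain; [exact g_nonneg|apply g_integrable|lra| |apply Rmax_r].
    unfold a, Rmin; repeat destruct Rle_dec; lra. }
  apply Rabs_def2 in Hpr. apply Rabs_def2 in HMx. unfold eps in *. lra.
Qed.

Lemma G_tails (eps : R) : 0 < eps -> exists M,
  (forall x, x <= - M -> G x < eps) /\ (forall x, M <= x -> 1 - eps < G x).
Proof.
  intros Heps. destruct (g_total eps Heps) as [M HM]. exists (Rabs M).
  pose proof (Rle_abs M). pose proof (Rle_abs (- M)). rewrite Rabs_Ropp in *.
  split; intros x Hx.
  - destruct (HM x (Rabs M) ltac:(lra) ltac:(lra)) as [pr Hpr].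
    rewrite RiemannInt_RInt, RInt_g in Hpr. pose proof (G_le_1 (Rabs M)).
    apply Rabs_def2 in Hpr. lra.
  - destruct (HM (- Rabs M) x ltac:(lra) ltac:(lra)) as [pr Hpr].
    rewrite RiemannInt_RInt, RInt_g in Hpr. pose proof (G_nonneg (- Rabs M)).
    apply Rabs_def2 in Hpr. lra.
Qed.

Lemma G_opp (x : R) : G (- x) = 1 - G x.
Proof.
  assert (Hrefl : forall b, G (- x) - G (- b) = G b - G x).
  { intros b.
    assert (E : RInt g (-1 * x + 0) (-1 * b + 0) = scal (-1) (RInt g x b)).
    { rewrite <- (RInt_comp_lin g (-1) 0 x b (g_integrable _ _)),
        <- (RInt_scal g x b (-1) (g_integrable _ _)).
      apply RInt_ext. intros y _. rewrite (g_even y). f_equal. f_equal. ring. }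
    rewrite !RInt_g in E. cbn in E. unfold mult in E; cbn in E.
    replace (-1 * x + 0) with (- x) in E by ring.
    replace (-1 * b + 0) with (- b) in E by ring. lra. }
  apply eq_of_close; intros eps Heps.
  destruct (G_tails (eps / 2)) as [M [HMl HMr]]; [lra|].
  pose proof (Hrefl (Rabs M)). pose proof (Rle_abs M). pose proof (Rle_abs (- M)).
  rewrite Rabs_Ropp in *.
  pose proof (HMl (- Rabs M) ltac:(lra)). pose proof (HMr (Rabs M) ltac:(lra)).
  pose proof (G_nonneg (- Rabs M)). pose proof (G_le_1 (Rabs M)).
  apply Rabs_def1; lra.
Qed.

Lemma G_0 : G 0 = 1 / 2.
Proof. pose proof (G_opp 0) as E. rewrite Ropp_0 in E. lra. Qed.

(* On a flat piece of [G] the density vanishes: if [G x = 0] then [g = 0]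
   to the left of [x], by unimodality. *)
Lemma g_zero_below (x z : R) : G x = 0 -> z < x -> g z = 0.
Proof.
  intros Gx Hzx. destruct (Rle_dec x 0) as [Hx|Hx].
  - apply Rle_antisym; [|apply g_nonneg].
    assert (Hint : g z * (x - z) <= G x - G z).
    { rewrite <- RInt_g.
      replace (g z * (x - z)) with (RInt (fun _ => g z) z x)
        by (rewrite RInt_const; cbn; unfold mult; cbn; ring).
      apply RInt_le; [lra|apply ex_RInt_const|apply g_integrable|].
      intros t Ht. rewrite (g_even z), (g_even t). apply g_nonincr; lra. }
    pose proof (G_nonneg z). apply Rmult_le_reg_r with (x - z); nra.
  - pose proof (G_nondecr 0 x). rewrite G_0 in *. lra.
Qed.

(* Right of the mode, [g] is nonincreasing, so shifting a window of width [h]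
   away from 0 decreases its probability. *)
Lemma G_increment (p x h : R) :
  0 <= p -> p <= x -> 0 <= h -> G (x + h) - G x <= G (p + h) - G p.
Proof.
  intros Hp Hpx Hh.
  rewrite <- (RInt_g p (p + h)).
  replace (G (x + h) - G x) with (RInt (fun t => g (t - (p - x))) p (p + h))
    by (rewrite RInt_shifted_g; f_equal; f_equal; ring).
  apply RInt_le; [lra|apply shifted_g_integrable|apply g_integrable|].
  intros t Ht. apply g_nonincr; lra.
Qed.

Lemma G_gt_half (e d : R) : 0 < e <= d -> 1 / 2 < G d -> 1 / 2 < G e.
Proof.
  intros He Hd. apply Rnot_le_lt; intro Hle.
  assert (Hflat : g e * e <= G e - G 0).
  { rewrite <- RInt_g.
    replace (g e * e) with (RInt (fun _ => g e) 0 e)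
      by (rewrite RInt_const; cbn; unfold mult; cbn; ring).
    apply RInt_le; [lra|apply ex_RInt_const|apply g_integrable|].
    intros t Ht. apply g_nonincr; lra. }
  assert (Hge : g e = 0).
  { rewrite G_0 in Hflat. pose proof (g_nonneg e).
    apply Rle_antisym; [apply Rmult_le_reg_r with e; lra|assumption]. }
  assert (Hright : G d - G e <= 0).
  { rewrite <- RInt_g.
    replace 0 with (RInt (fun _ => 0) e d)
      by (rewrite RInt_const; cbn; unfold mult; cbn; ring).
    apply RInt_le; [lra|apply g_integrable|apply ex_RInt_const|].
    intros t Ht. rewrite <- Hge. apply g_nonincr; lra. }
  lra.
Qed.

Lemma quantile_glb (t : R) : 0 < t < 1 -> is_glb (fun x => t <= G x) (quantile G t).
Proof.
  intros Ht. unfold quantile. apply epsilon_spec.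
  destruct (G_tails (Rmin t (1 - t))) as [M [HMl HMr]];
    [unfold Rmin; destruct Rle_dec; lra|].
  destruct (completeness (fun x => t <= G (- x))) as [m [Hub Hlub]].
  - exists M. intros x Hx. apply Rnot_lt_le; intro Hlt.
    specialize (HMl (- x) ltac:(lra)). unfold Rmin in HMl; destruct Rle_dec; lra.
  - exists (- M). rewrite Ropp_involutive. specialize (HMr M (Rle_refl _)).
    unfold Rmin in HMr; destruct Rle_dec; lra.
  - exists (- m). split.
    + intros x Hx. assert (- x <= m) by (apply Hub; rewrite Ropp_involutive; exact Hx). lra.
    + intros b Hb. assert (m <= - b); [|lra].
      apply Hlub. intros x Hx. specialize (Hb (- x) Hx). lra.
Qed.

(* [G] is continuous, so it attains every level at its quantile. *)
Lemma G_quantile (t : R) : 0 < t < 1 -> G (quantile G t) = t.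
Proof.
  intros Ht. destruct (quantile_glb t Ht) as [Hlb Hglb].
  set (q := quantile G t) in *.
  assert (Hstep : forall eps, 0 < eps -> exists d, 0 < d /\ g 0 * d <= eps).
  { intros eps Heps. pose proof (g_nonneg 0). exists (eps / (g 0 + 1)). split.
    - apply Rdiv_lt_0_compat; lra.
    - apply Rle_trans with ((g 0 + 1) * (eps / (g 0 + 1))); [|right; field; lra].
      assert (0 < eps / (g 0 + 1)) by (apply Rdiv_lt_0_compat; lra). nra. }
  apply Rle_antisym; apply Rle_plus_epsilon; intros eps Heps;
    destruct (Hstep eps Heps) as [d [Hd Hgd]].
  - assert (Hbelow : G (q - d) < t).
    { apply Rnot_le_lt; intro Hle. specialize (Hlb _ Hle). lra. }
    pose proof (G_lipschitz (q - d) q ltac:(lra)). lra.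
  - assert (Habove : t <= G (q + d)).
    { apply NNPP; intro Hn. assert (q + d <= q); [|lra].
      apply Hglb. intros y Hy. apply Rnot_lt_le; intro Hlt. apply Hn.
      apply Rle_trans with (G y); [exact Hy|apply G_nondecr; lra]. }
    pose proof (G_lipschitz q (q + d) ltac:(lra)). lra.
Qed.

Lemma quantile_le_iff (t y : R) : 0 < t < 1 -> quantile G t <= y <-> t <= G y.
Proof.
  intros Ht. split.
  - intros Hq. rewrite <- (G_quantile t Ht). apply G_nondecr, Hq.
  - intros Hy. apply (proj1 (quantile_glb t Ht)), Hy.
Qed.

Lemma quantile_mono (t1 t2 : R) :
  0 < t1 < 1 -> 0 < t2 < 1 -> t1 <= t2 -> quantile G t1 <= quantile G t2.
Proof.
  intros H1 H2 Ht. apply (quantile_le_iff t1 _ H1). rewrite (G_quantile t2 H2). exact Ht.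
Qed.

Hypothesis g_logconcave : logconcave g.

(* Log-concavity of [g]: the likelihood ratio [g (t - c) / g t] is
   nondecreasing in [t] for [c >= 0]. *)
Lemma g_ratio_mono (s t c : R) : s <= t -> 0 <= c -> g t * g (s - c) <= g (t - c) * g s.
Proof.
  intros Hst Hc.
  pose proof (g_nonneg t). pose proof (g_nonneg (s - c)).
  pose proof (g_nonneg (t - c)). pose proof (g_nonneg s).
  destruct (Req_dec (g t) 0) as [E|E]; [rewrite E; nra|].
  destruct (Req_dec (g (s - c)) 0) as [E'|E']; [rewrite E'; nra|].
  destruct (Req_dec c 0) as [->|Hc0].
  { rewrite !Rminus_0_r. nra. }
  destruct (Req_dec s t) as [->|Hst0]; [nra|].
  (* [s] and [t - c] are convex combinations of [s - c] and [t]. *)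
  set (l := (t - s) / (t - s + c)).
  assert (Hl : 0 <= l <= 1).
  { unfold l. split.
    - apply Rmult_le_pos; [lra|]. left; apply Rinv_0_lt_compat; lra.
    - apply Rmult_le_reg_r with (t - s + c); [lra|]. field_simplify; lra. }
  destruct (g_logconcave (s - c) t l ltac:(lra) ltac:(lra) Hl) as [Ps Ls].
  destruct (g_logconcave (s - c) t (1 - l) ltac:(lra) ltac:(lra) ltac:(lra)) as [Ptc Ltc].
  replace (l * (s - c) + (1 - l) * t) with s in Ps, Ls by (unfold l; field; lra).
  replace ((1 - l) * (s - c) + (1 - (1 - l)) * t) with (t - c) in Ptc, Ltc
    by (unfold l; field; lra).
  apply Rnot_lt_le; intro Hlt.
  apply ln_increasing in Hlt; [|nra].
  rewrite !ln_mult in Hlt by lra. lra.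
Qed.

(* Integrating [g_ratio_mono] over [s <= x]. *)
Lemma G_density_ratio (x t c : R) :
  x <= t -> 0 <= c -> g t * G (x - c) <= g (t - c) * G x.
Proof.
  intros Hxt Hc. apply Rle_plus_epsilon; intros eps Heps.
  pose proof (g_nonneg 0).
  destruct (G_tails (eps / (g 0 + 1))) as [M [HM _]]; [apply Rdiv_lt_0_compat; lra|].
  set (A := Rmin x (- M)).
  assert (HA : A <= x) by apply Rmin_l.
  assert (Hsmall : G (A - c) < eps / (g 0 + 1))
    by (apply HM; unfold A; pose proof (Rmin_r x (- M)); lra).
  assert (Hint : g t * (G (x - c) - G (A - c)) <= g (t - c) * (G x - G A)).
  { rewrite <- RInt_shifted_g, <- RInt_g, <- !RInt_scal_R
      by (apply g_integrable || apply shifted_g_integrable).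
    apply RInt_le; [exact HA|apply ex_RInt_scal_R, shifted_g_integrable|
      apply ex_RInt_scal_R, g_integrable|].
    intros s Hs. apply g_ratio_mono; lra. }
  assert (Htail : g t * G (A - c) <= eps).
  { apply Rle_trans with (g 0 * (eps / (g 0 + 1))).
    - apply Rmult_le_compat; [apply g_nonneg|apply G_nonneg|apply g_le_g0|lra].
    - apply Rle_trans with ((g 0 + 1) * (eps / (g 0 + 1))); [|right; field; lra].
      assert (0 < eps / (g 0 + 1)) by (apply Rdiv_lt_0_compat; lra). nra. }
  pose proof (G_nonneg A). pose proof (g_nonneg (t - c)). nra.
Qed.

(* Log-concavity of [G]: the ratio [G (y - c) / G y] is nondecreasing in [y]
   for [c >= 0] (integrate [G_density_ratio] over [x <= t <= y]). *)
Lemma G_ratio_mono (x y c : R) :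
  x <= y -> 0 <= c -> G (x - c) * G y <= G (y - c) * G x.
Proof.
  intros Hxy Hc.
  assert (Hint : G (x - c) * (G y - G x) <= G x * (G (y - c) - G (x - c))).
  { rewrite <- RInt_shifted_g, <- RInt_g, <- !RInt_scal_R
      by (apply g_integrable || apply shifted_g_integrable).
    apply RInt_le; [exact Hxy|apply ex_RInt_scal_R, g_integrable|
      apply ex_RInt_scal_R, shifted_g_integrable|].
    intros t Ht. rewrite Rmult_comm, (Rmult_comm (G x)). apply G_density_ratio; lra. }
  nra.
Qed.

Variable alpha : R.
Hypothesis alpha_range : 0 < alpha < 1.

Local Notation d0 := (dzero G alpha).
Local Notation d1 := (dzero1 G alpha).

Lemma d0_level_range : 0 < 1 / (1 + alpha) < 1.
Proof.
  split; [apply Rdiv_lt_0_compat; lra|].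
  apply Rmult_lt_reg_r with (1 + alpha); [lra|]. field_simplify; lra.
Qed.

Lemma G_d0 : G d0 = 1 / (1 + alpha).
Proof. apply G_quantile, d0_level_range. Qed.

Lemma G_d1 : G d1 = 1 - alpha / 2.
Proof. apply G_quantile; lra. Qed.

Lemma G_opp_d0 : G (- d0) = alpha * G d0.
Proof. rewrite G_opp, G_d0. field. lra. Qed.

Lemma G_opp_d1 : G (- d1) = alpha / 2.
Proof. rewrite G_opp, G_d1. ring. Qed.

Lemma d0_gt_half : 1 / 2 < G d0.
Proof.
  rewrite G_d0. apply Rmult_lt_reg_r with (2 * (1 + alpha)); [lra|].
  field_simplify; lra.
Qed.

(* Both [d0] and [d1] lie right of the mode since their levels exceed 1/2. *)
Lemma d0_pos : 0 < d0.
Proof.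
  apply Rnot_le_lt; intro Hle. pose proof (G_nondecr _ _ Hle).
  pose proof d0_gt_half. rewrite G_0 in *. lra.
Qed.

Lemma d1_pos : 0 < d1.
Proof.
  apply Rnot_le_lt; intro Hle. pose proof (G_nondecr _ _ Hle).
  rewrite G_d1, G_0 in *. lra.
Qed.

(* AM-GM in the form [(1 + alpha)^2 >= 4 alpha]. *)
Lemma level_amgm : 4 * (alpha * (1 / (1 + alpha))) * (alpha * (1 / (1 + alpha))) <= alpha.
Proof.
  replace (4 * (alpha * (1 / (1 + alpha))) * (alpha * (1 / (1 + alpha))))
    with (alpha * (4 * alpha / ((1 + alpha) * (1 + alpha)))) by (field; lra).
  apply Rle_trans with (alpha * 1); [apply Rmult_le_compat_l; [lra|]|lra].
  apply Rmult_le_reg_r with ((1 + alpha) * (1 + alpha)); [nra|].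
  unfold Rdiv; rewrite Rmult_assoc, Rinv_l by nra. nra.
Qed.

(* The central interval [-d0, d0] is not too short: [d1 <= 2 d0], by the
   log-concavity of [G] at the points [-d0] and [0]. *)
Lemma d1_le_2d0 : d1 <= 2 * d0.
Proof.
  pose proof d0_pos. apply (quantile_le_iff (1 - alpha / 2)); [lra|].
  pose proof (G_ratio_mono (- d0) 0 d0 ltac:(lra) ltac:(lra)) as Hlc.
  replace (- d0 - d0) with (- (2 * d0)) in Hlc by ring.
  rewrite Rminus_0_l, G_0, G_opp, G_opp_d0, G_d0 in Hlc.
  pose proof level_amgm. lra.
Qed.

Definition upper_level (x : R) : R := 1 / 2 + (1 - alpha) / 2 * G x.

Lemma upper_level_range (x : R) : 0 < upper_level x < 1.
Proof. unfold upper_level. pose proof (G_nonneg x). pose proof (G_le_1 x). nra. Qed.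

(* Right of [d0], [upper_level x <= G x] since [G x >= 1 / (1 + alpha)]. *)
Lemma upper_level_le_G (x : R) : d0 <= x -> upper_level x <= G x.
Proof.
  intros Hx. pose proof (G_nondecr _ _ Hx) as Hm. rewrite G_d0 in Hm.
  assert (1 <= (1 + alpha) * G x).
  { apply Rle_trans with ((1 + alpha) * (1 / (1 + alpha))); [right; field; lra|].
    apply Rmult_le_compat_l; lra. }
  unfold upper_level. nra.
Qed.

Lemma upper_quantile_bounds (x : R) :
  d0 <= x -> d0 <= quantile G (upper_level x) <= d1.
Proof.
  intros Hx. pose proof (G_nondecr _ _ Hx) as Hm. pose proof (G_le_1 x).
  pose proof (upper_level_range x). pose proof d0_level_range.
  unfold upper_level in *. rewrite G_d0 in Hm. split.
  - apply quantile_mono; [assumption|assumption|].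
    assert (1 / (1 + alpha) = 1 / 2 + (1 - alpha) / 2 * (1 / (1 + alpha))) by (field; lra).
    nra.
  - apply quantile_mono; [assumption|split; lra|nra].
Qed.

(* The values [x] of the observation with [G x > 0] whose HPD interval
   [l x, u x] contains [theta] (for [0 <= theta <= 2 d0]). *)
Definition covered (theta x : R) : Prop :=
  0 < G x /\
  ((x <= d0 /\ alpha * G x <= G (x - theta)) \/
   (d0 < x /\ x - quantile G (upper_level x) <= theta)).

(* For [G x > 0], [cover_ind] is the indicator of [covered]; the bound
   [theta <= 2 d0] makes the condition [theta <= u x] automatic right of [d0]. *)
Lemma cover_ind_covered (theta x : R) :
  0 <= theta <= 2 * d0 -> covered theta x -> cover_ind G alpha theta x = 1.
Proof.
  intros Htheta [Gx Hcov]. unfold cover_ind, hpd_l. fold (upper_level x).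
  destruct (Rle_dec x d0) as [Hx|Hx].
  - destruct Hcov as [[_ Hcov]|[Hx' _]]; [|lra].
    destruct (Rle_dec 0 theta); [|lra].
    destruct (Req_EM_T (G x) 0); [reflexivity|].
    destruct (Rle_dec theta (x - quantile G (alpha * G x))) as [|Hn]; [reflexivity|].
    exfalso; apply Hn. pose proof (G_le_1 x).
    assert (0 < alpha * G x < 1) by nra.
    apply (quantile_le_iff (alpha * G x) (x - theta)) in Hcov; [lra|assumption].
  - destruct Hcov as [[Hx' _]|[_ Hcov]]; [lra|].
    destruct Rle_dec; [|lra].
    destruct Rle_dec as [|Hn]; [reflexivity|].
    exfalso; apply Hn. pose proof (upper_quantile_bounds x ltac:(lra)). lra.
Qed.

Lemma cover_ind_not_covered (theta x : R) :
  0 < G x -> ~ covered theta x -> cover_ind G alpha theta x = 0.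
Proof.
  intros Gx Hcov. unfold cover_ind, hpd_l. fold (upper_level x).
  destruct (Rle_dec x d0) as [Hx|Hx].
  - destruct (Rle_dec 0 theta); [|reflexivity].
    destruct (Req_EM_T (G x) 0); [lra|].
    destruct Rle_dec as [Hu|]; [|reflexivity].
    exfalso; apply Hcov. split; [exact Gx|left; split; [exact Hx|]].
    pose proof (G_le_1 x). assert (0 < alpha * G x < 1) by nra.
    apply (quantile_le_iff (alpha * G x) (x - theta)); [assumption|lra].
  - destruct Rle_dec as [Hl|]; [|reflexivity].
    exfalso; apply Hcov. split; [exact Gx|right; split; lra].
Qed.

(* Where [G x = 0], the posterior upper bound is [+oo] and [x] is always covered. *)
Lemma cover_ind_G_zero (theta x : R) :
  0 <= theta -> G x = 0 -> cover_ind G alpha theta x = 1.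
Proof.
  intros Htheta Gx. unfold cover_ind, hpd_l.
  assert (Hx : x <= d0).
  { apply Rnot_lt_le; intro Hlt. pose proof (G_nondecr _ _ (Rlt_le _ _ Hlt)).
    pose proof d0_gt_half. lra. }
  destruct (Rle_dec x d0); [|lra].
  destruct (Rle_dec 0 theta); [|lra].
  destruct (Req_EM_T (G x) 0); [reflexivity|lra].
Qed.

(* Left of [d0], coverage is upward closed, by log-concavity of [G]. *)
Lemma covered_left_up (theta x y : R) :
  0 <= theta -> x <= y -> 0 < G x ->
  alpha * G x <= G (x - theta) -> alpha * G y <= G (y - theta).
Proof.
  intros Htheta Hxy Gx Hx.
  pose proof (G_ratio_mono x y theta Hxy Htheta). pose proof (G_nonneg y).
  apply Rmult_le_reg_r with (G x); [exact Gx|]. nra.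
Qed.

(* Right of [d0], the lower bound [l x] is nondecreasing, by unimodality. *)
Lemma hpd_lower_mono (x y : R) :
  d0 < x -> x <= y -> x - quantile G (upper_level x) <= y - quantile G (upper_level y).
Proof.
  intros Hx Hxy.
  pose proof (upper_level_range x). pose proof (upper_level_range y).
  destruct (upper_quantile_bounds x ltac:(lra)) as [Hp _]. pose proof d0_pos.
  set (p := quantile G (upper_level x)) in *.
  assert (Hpx : p <= x).
  { apply (quantile_le_iff (upper_level x)); [assumption|].
    apply upper_level_le_G; lra. }
  pose proof (G_increment p x (y - x) ltac:(lra) Hpx ltac:(lra)) as Hinc.
  replace (x + (y - x)) with y in Hinc by ring.
  assert (quantile G (upper_level y) <= p + (y - x)); [|lra].
  apply (quantile_le_iff (upper_level y)); [assumption|].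
  assert (Gp : G p = upper_level x) by (apply G_quantile; assumption).
  pose proof (G_nondecr _ _ Hxy). unfold upper_level in *. nra.
Qed.

Lemma covered_convex (theta : R) : 0 <= theta -> order_convex (covered theta).
Proof.
  intros Htheta x y z [Gx Hx] [Gz Hz] Hy.
  assert (Gy : 0 < G y) by (pose proof (G_nondecr x y ltac:(lra)); lra).
  split; [exact Gy|].
  destruct (Rle_dec y d0) as [Hyd|Hyd].
  - left. split; [exact Hyd|]. destruct Hx as [[_ Hx]|[Hxd _]]; [|lra].
    apply (covered_left_up theta x y); auto; lra.
  - right. split; [lra|]. destruct Hz as [[Hzd _]|[_ Hz]]; [lra|].
    pose proof (hpd_lower_mono y z ltac:(lra) ltac:(lra)). lra.
Qed.

(* Left of [d0], no [x] with [G x > 0] covers [theta = 2 d0].  Otherwise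
   log-concavity of [G], applied on both sides of the mode, would force
   [G (d0 - x) <= 1/2], contradicting [G_gt_half]. *)
Lemma not_covered_left (x : R) : x < d0 -> 0 < G x -> G (x - 2 * d0) < alpha * G x.
Proof.
  intros Hx Gx. apply Rnot_le_lt; intro Hcov. pose proof d0_pos.
  set (x' := Rmax x 0).
  assert (Hx' : x <= x' /\ 0 <= x' /\ x' < d0) by (unfold x', Rmax; destruct Rle_dec; lra).
  assert (Gx' : 0 < G x') by (pose proof (G_nondecr x x' ltac:(lra)); lra).
  pose proof (covered_left_up (2 * d0) x x' ltac:(lra) ltac:(lra) Gx Hcov) as Hcov'.
  set (e := d0 - x').
  assert (HE : 1 / 2 < G e) by (apply (G_gt_half e d0); [unfold e; lra|apply d0_gt_half]).
  pose proof (G_ratio_mono (- d0) 0 e ltac:(lra) ltac:(unfold e; lra)) as Hleft.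
  pose proof (G_ratio_mono e d0 e ltac:(unfold e; lra) ltac:(unfold e; lra)) as Hright.
  replace (x' - 2 * d0) with (- d0 - e) in Hcov' by (unfold e; ring).
  replace (d0 - e) with x' in Hright by (unfold e; ring).
  rewrite Rminus_0_l, G_opp, G_0, G_opp_d0 in Hleft.
  rewrite Rminus_diag, G_0 in Hright.
  set (a := G (- d0 - e)) in *. set (D := G d0) in *.
  set (D' := G x') in *. set (E := G e) in *.
  assert (HD : 1 / 2 < D) by apply d0_gt_half.
  assert (Ha : 0 < a) by nra.
  assert (Hchain : a / 2 * (D / 2) <= (1 - E) * E * (a * D)).
  { apply Rle_trans with ((1 - E) * (alpha * D) * (D' * E)).
    - apply Rmult_le_compat; nra.
    - replace ((1 - E) * (alpha * D) * (D' * E)) with ((1 - E) * E * D * (alpha * D'))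
        by ring.
      replace ((1 - E) * E * (a * D)) with ((1 - E) * E * D * a) by ring.
      apply Rmult_le_compat_l; [pose proof (G_le_1 e); nra|exact Hcov']. }
  assert (1 / 4 <= (1 - E) * E).
  { apply Rmult_le_reg_r with (a * D); [nra|]. lra. }
  nra.
Qed.

Lemma cov_integrand_split (theta x : R) : 0 <= theta <= 2 * d0 ->
  cov_integrand g G alpha theta x =
  mask (covered theta) (fun t => g (t - theta)) x +
  mask (fun t => G t = 0) (fun t => g (t - theta)) x.
Proof.
  intros Htheta. unfold cov_integrand, mask.
  destruct (excluded_middle_informative (covered theta x)) as [Hc|Hc];
    destruct (excluded_middle_informative (G x = 0)) as [Hz|Hz].
  - exfalso. destruct Hc as [Gx _]. lra.
  - rewrite cover_ind_covered by assumption. ring.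
  - rewrite cover_ind_G_zero by (lra || assumption). ring.
  - pose proof (G_nonneg x).
    rewrite cover_ind_not_covered by (lra || assumption). ring.
Qed.

Lemma cov_integrable (theta a b : R) :
  0 <= theta <= 2 * d0 -> ex_RInt (cov_integrand g G alpha theta) a b.
Proof.
  intros Htheta.
  apply (ex_RInt_ext (fun x => plus (mask (covered theta) (fun t => g (t - theta)) x)
                                     (mask (fun t => G t = 0) (fun t => g (t - theta)) x))).
  - intros x _. symmetry. apply cov_integrand_split, Htheta.
  - apply (@ex_RInt_plus R_NormedModule); apply ex_RInt_mask; try apply shifted_g_integrable.
    + apply covered_convex; lra.
    + intros x y z Gx Gz Hy. pose proof (G_nondecr x y ltac:(lra)).
      pose proof (G_nondecr y z ltac:(lra)). pose proof (G_nonneg x). lra.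
Qed.

Lemma cov_integrand_bounds (theta x : R) :
  0 <= cov_integrand g G alpha theta x <= g (x - theta).
Proof.
  unfold cov_integrand. pose proof (g_nonneg (x - theta)).
  assert (H01 : cover_ind G alpha theta x = 0 \/ cover_ind G alpha theta x = 1)
    by (unfold cover_ind; repeat destruct Rle_dec; try destruct Req_EM_T; auto).
  destruct H01 as [-> | ->]; lra.
Qed.

Lemma coverage_exists (theta : R) :
  0 <= theta <= 2 * d0 -> exists V, improper_int (cov_integrand g G alpha theta) V.
Proof.
  intros Htheta. apply (improper_int_exists _ 1).
  - intros x. apply cov_integrand_bounds.
  - intros a b. apply cov_integrable, Htheta.
  - intros a b Hab. apply Rle_trans with (RInt (fun t => g (t - theta)) a b).
    + apply RInt_le; [exact Hab|apply cov_integrable, Htheta|apply shifted_g_integrable|].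
      intros x _. apply cov_integrand_bounds.
    + rewrite RInt_shifted_g. pose proof (G_le_1 (b - theta)).
      pose proof (G_nonneg (a - theta)). lra.
Qed.

(* For [0 <= theta <= d1] the whole window [theta - d1, theta + d0] is
   covered, so [C theta >= G d0 - G (-d1)]. *)
Lemma coverage_lower_bound (theta V : R) :
  0 <= theta <= d1 -> improper_int (cov_integrand g G alpha theta) V ->
  G d0 - G (- d1) <= V.
Proof.
  intros Htheta HV. pose proof d1_le_2d0. pose proof d0_pos.
  assert (Htheta2 : 0 <= theta <= 2 * d0) by lra.
  assert (Hwindow : forall x, theta - d1 <= x <= theta + d0 -> covered theta x).
  { intros x Hx.
    assert (Gl : alpha * G (theta - d1) <= G (theta - d1 - theta)).
    { replace (theta - d1 - theta) with (- d1) by ring. rewrite G_opp_d1.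
      pose proof (G_nondecr (theta - d1) 0 ltac:(lra)). rewrite G_0 in *. nra. }
    assert (G0 : 0 < G (theta - d1)).
    { pose proof (G_nondecr (- d1) (theta - d1) ltac:(lra)). rewrite G_opp_d1 in *. lra. }
    assert (Gx : 0 < G x) by (pose proof (G_nondecr _ _ (proj1 Hx)); lra).
    split; [exact Gx|]. destruct (Rle_dec x d0) as [Hxd|Hxd].
    - left. split; [exact Hxd|]. apply (covered_left_up theta (theta - d1)); auto; lra.
    - right. split; [lra|]. pose proof (upper_quantile_bounds x ltac:(lra)). lra. }
  replace (G d0 - G (- d1)) with (RInt (cov_integrand g G alpha theta) (theta - d1) (theta + d0)).
  - apply RInt_le_improper_int; [apply cov_integrand_bounds|
      intros; apply cov_integrable, Htheta2|exact HV|lra].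
  - transitivity (RInt (fun t => g (t - theta)) (theta - d1) (theta + d0)).
    + apply RInt_ext. intros x Hx. rewrite Rmin_left, Rmax_right in Hx by lra.
      unfold cov_integrand. rewrite (cover_ind_covered theta x Htheta2 (Hwindow x ltac:(lra))).
      apply Rmult_1_l.
    + rewrite RInt_shifted_g. f_equal; f_equal; ring.
Qed.

(* For [theta = 2 d0] nothing outside [d0, 2 d0 + d1] is covered, so
   [C (2 d0) <= G d1 - G (-d0)]. *)
Lemma coverage_upper_bound (V : R) :
  improper_int (cov_integrand g G alpha (2 * d0)) V -> V <= G d1 - G (- d0).
Proof.
  intros HV. pose proof d1_le_2d0. pose proof d0_pos. pose proof d1_pos.
  assert (Htheta : 0 <= 2 * d0 <= 2 * d0) by lra.
  rewrite (improper_int_compact_support (cov_integrand g G alpha (2 * d0)) V d0 (2 * d0 + d1));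
    [| |lra| |exact HV].
  - apply Rle_trans with (RInt (fun t => g (t - 2 * d0)) d0 (2 * d0 + d1)).
    + apply RInt_le; [lra|apply cov_integrable, Htheta|apply shifted_g_integrable|].
      intros x _. apply cov_integrand_bounds.
    + rewrite RInt_shifted_g. right; f_equal; f_equal; ring.
  - intros a b. apply cov_integrable, Htheta.
  - intros x [Hx|Hx]; unfold cov_integrand.
    + pose proof (G_nonneg x). destruct (Req_dec (G x) 0) as [Gx|Gx].
      * rewrite (g_zero_below x (x - 2 * d0) Gx ltac:(lra)). ring.
      * rewrite cover_ind_not_covered; [ring|lra|].
        intros [_ [[_ Hc]|[Hc _]]]; [|lra].
        pose proof (not_covered_left x Hx ltac:(lra)). lra.
    + assert (Gx : 0 < G x).
      { pose proof (G_nondecr d0 x ltac:(lra)). pose proof d0_gt_half. lra. }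
      rewrite cover_ind_not_covered; [ring|exact Gx|].
      intros [_ [[Hc _]|[_ Hc]]]; [lra|].
      pose proof (upper_quantile_bounds x ltac:(lra)). lra.
Qed.

Lemma coverage_bounds_agree : G d1 - G (- d0) = G d0 - G (- d1).
Proof. rewrite !G_opp. ring. Qed.

End Distribution.

Theorem lemma6 (g G : R -> R) (alpha theta : R)
  (Halpha : 0 < alpha < 1)
  (Hdens : is_density g) (Hsym : symmetric_unimodal g) (Hlc : logconcave g)
  (HG : forall x, lower_int g x (G x))
  (Htheta : 0 <= theta <= dzero1 G alpha) :
  exists C_theta C_2d0,
    improper_int (cov_integrand g G alpha theta) C_theta /\
    improper_int (cov_integrand g G alpha (2 * dzero G alpha)) C_2d0 /\
    C_2d0 <= C_theta.
Proof.
  destruct Hdens as [g_nonneg g_total], Hsym as [g_even g_nonincr].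
  assert (Hd0 : 0 < dzero G alpha) by (eapply d0_pos; eauto).
  assert (Hd1 : dzero1 G alpha <= 2 * dzero G alpha) by (eapply d1_le_2d0; eauto).
  assert (Hex : exists C, improper_int (cov_integrand g G alpha theta) C)
    by (eapply coverage_exists; eauto; lra).
  assert (Hex2 : exists C, improper_int (cov_integrand g G alpha (2 * dzero G alpha)) C)
    by (eapply coverage_exists; eauto; lra).
  destruct Hex as [C_theta HC], Hex2 as [C_2d0 HC2].
  exists C_theta, C_2d0. split; [exact HC|split; [exact HC2|]].
  apply Rle_trans with (G (dzero1 G alpha) - G (- dzero G alpha)).
  - eapply coverage_upper_bound; eauto.
  - erewrite coverage_bounds_agree by eauto. eapply coverage_lower_bound; eauto.
Qed.
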